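(* Let $D=(V,A)$ be a directed graph on $n$ vertices with distinct vertices $s,t$, let $M>0$, and let $\mathbf y:V\to\mathbb R$ satisfy $|\mathbf y(u)-\mathbf y(v)|\le M$ for all $u,v\in V$. Define the energy of an arc $(u,v)$ as $\mathcal E(u,v)=\int_{\mathbf y(v)-\mathbf y(u)}^{M}\frac{1}{\max\{x,0\}+1}\,dx$, and the total energy of $D$ as $\sum_{(u,v)\in A}\mathcal E(u,v)$. Let $D'$ be obtained from $D$ by reversing every arc of a simple directed path from $s$ to $t$ in $D$ (with $\mathbf y$ unchanged). Then the total energy of $D'$ exceeds the total energy of $D$ by at most $\mathbf y(t)-\mathbf y(s)+(n-1)\ln(M+1)$. *)

From mathcomp Require Import all_boot.
From Stdlib Require Import Reals.
From Coquelicot Require Import Coquelicot.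

Set Implicit Arguments.
Unset Strict Implicit.
Unset Printing Implicit Defensive.

Local Open Scope R_scope.

(* A directed (multi)graph on the finite vertex type V is given by its list of
   arcs A : seq (V * V) (arc (u,v) goes from u to v). *)

Definition arc_energy {V : Type} (y : V -> R) (M : R) (e : V * V) : R :=
  RInt (fun x => 1 / (Rmax x 0 + 1)) (y e.2 - y e.1) M.

Definition total_energy {V : Type} (y : V -> R) (M : R) (A : seq (V * V)) : R :=
  foldr Rplus 0 (map (arc_energy y M) A).

Definition path_arcs {V : Type} (p : seq V) : seq (V * V) := zip p (behead p).

Definition simple_dipath {V : eqType} (A : seq (V * V)) (s t : V) (p : seq V) : Prop :=
  [/\ head s p = s, last s p = t, p != [::], uniq p
    & all (fun e => e \in A) (path_arcs p)].

Definition reverse_path {V : eqType} (A : seq (V * V)) (p : seq V) : seq (V * V) :=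
  foldr (fun e B => rem e B) A (path_arcs p) ++
  map (fun e => (e.2, e.1)) (path_arcs p).

From mathcomp Require Import all_boot.
From Stdlib Require Import Reals Lra.
From Coquelicot Require Import Coquelicot.

Local Open Scope R_scope.

(* The energy density 1/(max{x,0}+1) has the primitive F with F x = x for
   x <= 0 and F x = ln (x+1) for x >= 0, so E(u,v) = F M - F (y v - y u).
   Reversing the arc (u,v) therefore changes the energy by F d - F (-d) with
   d = y v - y u, which is at most d + ln (|d|+1) <= d + ln (M+1).  Along a
   path the terms d telescope to y t - y s, and a simple path has at most
   n - 1 arcs. *)

Definition energy_density (x : R) : R := 1 / (Rmax x 0 + 1).

Definition energy_primitive (x : R) : R :=
  if Rle_dec x 0 then x else ln (x + 1).

Lemma energy_primitive_nonpos x : x <= 0 -> energy_primitive x = x.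
Proof. by rewrite /energy_primitive; case: Rle_dec => //; lra. Qed.

Lemma energy_primitive_nonneg x : 0 <= x -> energy_primitive x = ln (x + 1).
Proof.
rewrite /energy_primitive; case: Rle_dec => // x_le0 x_ge0.
have x_eq0 : x = 0 by lra.
by subst x; rewrite Rplus_0_l ln_1.
Qed.

Lemma is_RInt_energy_density_nonpos a b : a <= 0 -> b <= 0 ->
  is_RInt energy_density a b (b - a).
Proof.
move=> a_le0 b_le0.
apply: (is_RInt_ext (fun=> 1)).
  move=> x [_ x_lt]; rewrite /energy_density Rmax_right; last first.
    have : Rmax a b <= 0 by apply: Rmax_lub.
    lra.
  by rewrite Rplus_0_l /Rdiv Rinv_1 Rmult_1_l.
have := is_RInt_const a b 1.
by rewrite /scal /= /mult /= Rmult_1_r.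
Qed.

Lemma is_RInt_energy_density_nonneg a b : 0 <= a -> 0 <= b ->
  is_RInt energy_density a b (ln (b + 1) - ln (a + 1)).
Proof.
move=> a_ge0 b_ge0.
have min_ge0 : 0 <= Rmin a b by apply: Rmin_glb.
apply: (is_RInt_ext (fun x => 1 / (x + 1))).
  by move=> x [x_gt _]; rewrite /energy_density Rmax_left //; lra.
apply: (is_RInt_derive (fun x => ln (x + 1))).
  by move=> x [x_ge _]; auto_derive; [lra | field; lra].
by move=> x [x_ge _]; apply: ex_derive_continuous; auto_derive; lra.
Qed.

Lemma is_RInt_energy_density_from0 b :
  is_RInt energy_density 0 b (energy_primitive b).
Proof.
case: (Rle_dec b 0) => [b_le0 | /Rnot_le_lt b_gt0].
  have := is_RInt_energy_density_nonpos 0 b (Rle_refl 0) b_le0.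
  by rewrite energy_primitive_nonpos // Rminus_0_r.
have := is_RInt_energy_density_nonneg 0 b (Rle_refl 0) (Rlt_le _ _ b_gt0).
by rewrite energy_primitive_nonneg; [rewrite Rplus_0_l ln_1 Rminus_0_r | lra].
Qed.

Lemma RInt_energy_density a b :
  RInt energy_density a b = energy_primitive b - energy_primitive a.
Proof.
apply: is_RInt_unique.
have := is_RInt_Chasles _ _ _ _ _ _
  (is_RInt_swap _ _ _ _ (is_RInt_energy_density_from0 a))
  (is_RInt_energy_density_from0 b).
by rewrite /plus /opp /= Rplus_comm.
Qed.

Lemma ln_succ_ge0 x : 0 <= x -> 0 <= ln (x + 1).
Proof. by move=> x_ge0; rewrite -ln_1; apply: ln_le; lra. Qed.

Lemma energy_primitive_sub_opp_le d :
  energy_primitive d - energy_primitive (- d) <= d + ln (Rabs d + 1).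
Proof.
case: (Rle_dec 0 d) => [d_ge0 | /Rnot_le_lt d_lt0].
  rewrite energy_primitive_nonneg // energy_primitive_nonpos; last lra.
  by rewrite Rabs_right; lra.
rewrite energy_primitive_nonpos; last lra.
rewrite energy_primitive_nonneg; last lra.
have := ln_succ_ge0 (- d); have := ln_succ_ge0 (Rabs d) (Rabs_pos d); lra.
Qed.

Lemma arc_energy_reverse_le {V : Type} (y : V -> R) M u v :
  Rabs (y v - y u) <= M ->
  arc_energy y M (v, u) - arc_energy y M (u, v) <= y v - y u + ln (M + 1).
Proof.
move=> d_le_M.
rewrite /arc_energy /= -/energy_density !RInt_energy_density.
have -> : y u - y v = - (y v - y u) by ring.
have ln_le_M : ln (Rabs (y v - y u) + 1) <= ln (M + 1).
  by apply: ln_le; have := Rabs_pos (y v - y u); lra.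
have := energy_primitive_sub_opp_le (y v - y u); lra.
Qed.

Lemma total_energy_cons {V : Type} (y : V -> R) M e B :
  total_energy y M (e :: B) = arc_energy y M e + total_energy y M B.
Proof. by []. Qed.

Lemma total_energy_cat {V : Type} (y : V -> R) M B C :
  total_energy y M (B ++ C) = total_energy y M B + total_energy y M C.
Proof.
elim: B => [|e B IH]; first by rewrite /= Rplus_0_l.
by rewrite cat_cons !total_energy_cons IH Rplus_assoc.
Qed.

Lemma total_energy_rem {V : eqType} (y : V -> R) M e B : e \in B ->
  total_energy y M (rem e B) = total_energy y M B - arc_energy y M e.
Proof.
elim: B => [//|a B IH]; rewrite in_cons rem_cons.
have [-> _ | a_neq_e /= e_in_B] := eqVneq a e.
  by rewrite total_energy_cons; ring.
by rewrite !total_energy_cons IH //; ring.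
Qed.

Lemma mem_foldr_rem {T : eqType} (A es : seq T) x :
  x \in A -> x \notin es -> x \in foldr (fun e B => rem e B) A es.
Proof.
elim: es => [//|e es IH] x_in_A; rewrite in_cons negb_or => /andP [x_neq_e x_nin].
by apply: rem_mem => //; apply: IH.
Qed.

Lemma total_energy_foldr_rem {V : eqType} (y : V -> R) M A es :
  uniq es -> all (fun e => e \in A) es ->
  total_energy y M (foldr (fun e B => rem e B) A es)
    = total_energy y M A - total_energy y M es.
Proof.
elim: es => [|e es IH] /=; first by rewrite Rminus_0_r.
move=> /andP [e_nin es_uniq] /andP [e_in_A es_in_A].
rewrite total_energy_rem; last exact: mem_foldr_rem.
by rewrite IH // total_energy_cons; ring.
Qed.

Lemma total_energy_reverse_path {V : eqType} (y : V -> R) M A p :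
  uniq (path_arcs p) -> all (fun e => e \in A) (path_arcs p) ->
  total_energy y M (reverse_path A p) - total_energy y M A
    = total_energy y M (map (fun e => (e.2, e.1)) (path_arcs p))
      - total_energy y M (path_arcs p).
Proof.
move=> arcs_uniq arcs_in_A.
rewrite /reverse_path total_energy_cat total_energy_foldr_rem //; ring.
Qed.

Lemma reversed_path_energy_le {V : Type} (y : V -> R) M
  (y_bounded : forall u v : V, Rabs (y u - y v) <= M) (x : V) (q : seq V) :
  total_energy y M (map (fun e => (e.2, e.1)) (path_arcs (x :: q)))
    - total_energy y M (path_arcs (x :: q))
  <= y (last x q) - y x + INR (size q) * ln (M + 1).
Proof.
elim: q x => [|z q IH] x; first by rewrite /total_energy /=; lra.
have -> : path_arcs (x :: z :: q) = (x, z) :: path_arcs (z :: q) by [].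
rewrite map_cons !total_energy_cons [size _]/= S_INR.
have := IH z; have := arc_energy_reverse_le y M x z (y_bounded z x).
rewrite /=; lra.
Qed.

Lemma uniq_size_behead_le {T : finType} (x : T) (q : seq T) :
  uniq (x :: q) -> INR (size q) <= INR #|T| - 1.
Proof.
move=> xq_uniq.
have : (size (x :: q) <= #|T|)%nat by rewrite -(card_uniqP xq_uniq) max_card.
by move/leP/le_INR; rewrite [size _]/= S_INR; lra.
Qed.

Theorem lemma3p7 (V : finType) (A : seq (V * V)) (s t : V) (M : R) (y : V -> R)
  (p : seq V) :
  s <> t -> 0 < M ->
  (forall u v : V, Rabs (y u - y v) <= M) ->
  simple_dipath A s t p ->
  total_energy y M (reverse_path A p) - total_energy y M A
    <= y t - y s + (INR #|V| - 1) * ln (M + 1).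
Proof.
move=> _ M_gt0 y_bounded [].
case: p => [//|x q] /= x_eq_s; subst x => last_t _ sq_uniq arcs_in_A.
rewrite total_energy_reverse_path //; last exact: zip_uniql.
apply: Rle_trans (reversed_path_energy_le y M y_bounded s q) _.
rewrite last_t; apply: Rplus_le_compat_l; apply: Rmult_le_compat_r.
  exact: ln_succ_ge0 M (Rlt_le _ _ M_gt0).
exact: uniq_size_behead_le s q sq_uniq.
Qed.
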